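(* Let $\varphi$ be an instance of 2-Clause 3-SAT and let $G(\varphi)$ be the graph constructed from $\varphi$ as described in the context. If $\varphi$ is satisfiable, then $\mathrm{wcol}_2(G(\varphi)) \leq 5$.
   Context: 2-Clause 3-SAT: given a CNF formula $\varphi$ with clauses $c_1,\dots,c_m$ over variables $x_1,\dots,x_n$ in which each clause contains at most 3 literals and each literal ($x_j$ or $\overline{x}_j$) appears in exactly 2 clauses, decide whether $\varphi$ is satisfiable. It is assumed throughout that no variable appears twice in a single clause and that there are no clauses with a single literal (so each clause has 2 or 3 literals). Construction of $G(\varphi)$: for each clause $c_i$ create 6 vertices $u_i^1,\dots,u_i^6$. If $c_i$ contains only 2 literals, add 2 more vertices $f_i, f'_i$, each adjacent to all of $u_i^1,\dots,u_i^6$. For each variable $x_j$ create two vertices $v_j$ and $v'_j$ (for the literals $x_j$ and $\overline{x}_j$) joined by an edge. For each clause $c_i$ containing the literal $x_j$, add an edge from $v_j$ to each of $u_i^1,\dots,u_i^6$; for each clause $c_i$ containing $\overline{x}_j$, add an edge from $v'_j$ to each of $u_i^1,\dots,u_i^6$. Weak coloring numbers: for a graph $G=(V,E)$ and a total order $\sigma$ of $V$, a vertex $v\neq u$ is weakly $r$-reachable from $u$ if $u <_\sigma v$ and there is a $u$–$v$ path $P$ of length at most $r$ such that every vertex $p$ of $P$ other than $u,v$ satisfies $p <_\sigma v$. Let $\mathrm{wreach}_r(u,G_\sigma)$ be the set of such $v$. Then $\mathrm{wcol}_r(G)=\min_\sigma \max_{u\in V}|\mathrm{wreach}_r(u,G_\sigma)|$,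 the minimum over all total orders of $V$. (A vertex is not considered reachable from itself.) *)

From mathcomp Require Import all_boot.
From mathcomp Require Import boolp.
Set Implicit Arguments. Unset Strict Implicit. Unset Printing Implicit Defensive.

(* A literal over variables x_0..x_{n-1}: (j, true) is x_j, (j, false) is ~x_j.
   A formula with m clauses is a map cl : 'I_m -> {set literal}. *)
Definition literal (n : nat) := ('I_n * bool)%type.

Definition is_2c3sat (n m : nat) (cl : 'I_m -> {set literal n}) : Prop :=
  (forall i, #|cl i| = 2 \/ #|cl i| = 3) /\
  (forall i (j : 'I_n), ~ ((j, true) \in cl i /\ (j, false) \in cl i)) /\
  (forall l : literal n, #|[set i | l \in cl i]| = 2).

Definition satisfiable (n m : nat) (cl : 'I_m -> {set literal n}) : Prop :=
  exists a : 'I_n -> bool, forall i, exists2 l, l \in cl i & a l.1 = l.2.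

(* raw vertices:  inl (inl (i,k)) = u_i^{k+1} (k < 6),
                  inl (inr (i,b)) = f_i (b=true) / f'_i (b=false),
                  inr (j,b)       = v_j (b=true) / v'_j (b=false). *)
Definition rawV (n m : nat) :=
  ((('I_m * 'I_6) + ('I_m * bool)) + ('I_n * bool))%type.

Definition presentV (n m : nat) (cl : 'I_m -> {set literal n}) (x : rawV n m) : bool :=
  match x with
  | inl (inr (i, _)) => #|cl i| == 2
  | _ => true
  end.

Definition GV (n m : nat) (cl : 'I_m -> {set literal n}) :=
  {x : rawV n m | presentV cl x}.

Definition rawadj (n m : nat) (cl : 'I_m -> {set literal n}) (x y : rawV n m) : bool :=
  match x, y with
  | inl (inl (i, _)), inl (inr (i', _)) => i == i'
  | inl (inr (i, _)), inl (inl (i', _)) => i == i'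
  | inr (j, b), inr (j', b') => (j == j') && (b != b')
  | inr l, inl (inl (i, _)) => l \in cl i
  | inl (inl (i, _)), inr l => l \in cl i
  | _, _ => false
  end.

Definition Gadj (n m : nat) (cl : 'I_m -> {set literal n}) : rel (GV cl) :=
  fun x y => rawadj cl (val x) (val y).

(* A total order sigma of V is given by an injective rank function
   f : V -> 'I_#|V|  (u <_sigma v  iff  f u < f v). *)
(* v is weakly r-reachable from u: u <_sigma v and there is a u-v path
   u = p_0, p_1, ..., p_k = v (distinct vertices, consecutive adjacent)
   of length k <= r whose inner vertices are all <_sigma v. *)
Definition wreachable (V : finType) (e : rel V) (f : V -> nat) (r : nat)
    (u v : V) : Prop :=
  f u < f v /\
  exists s : seq V,
    [/\ path e u s, last u s = v, uniq (u :: s), size s <= r &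
        all (fun p => f p < f v) (take (size s).-1 s)].

Definition wreach (V : finType) (e : rel V) (f : V -> nat) (r : nat) (u : V)
  : {set V} := [set v | `[< wreachable e f r u v >]].

Definition wcol (V : finType) (e : rel V) (r : nat) : nat :=
  \big[minn/#|V|]_(f : {ffun V -> 'I_#|V|} | injectiveb f)
     \max_(u : V) #|wreach e (fun x => nat_of_ord (f x)) r u|.

(* Order the vertices by level: first the clause vertices u_i^k, then the
   f_i, f'_i, then the vertices of the literals that are false under a
   satisfying assignment, and last those of the true literals.  A vertex weakly
   2-reachable from x then lies in a set of at most 5 vertices:
   - from u_i^k: the literals of c_i, the f_i, f'_i if present, and the
     complements of the false literals of c_i (a path u_i^k, l, ~l needs l
     below ~l, i.e. l false); c_i is satisfied, so this is 3 + 0 + 2 or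
     2 + 2 + 1;
   - from f_i: the two literals of c_i and f_i, f'_i;
   - from a literal l: its complement and the at most two other literals of
     each of the two clauses containing l. *)

From mathcomp Require Import all_boot.
From mathcomp Require Import boolp.
Set Implicit Arguments. Unset Strict Implicit. Unset Printing Implicit Defensive.

Lemma geq_bigminn_cond (I : finType) (P : pred I) (F : I -> nat) x0 i0 :
  P i0 -> \big[minn/x0]_(i | P i) F i <= F i0.
Proof.
move=> Pi0; have : i0 \in index_enum I by exact: mem_index_enum.
elim: (index_enum I) => [//|j r IHr]; rewrite inE big_cons.
case/orP=> [/eqP <-|/IHr le_r]; first by rewrite Pi0 geq_minl.
by case: (P j) => //; apply: leq_trans (geq_minr _ _) le_r.
Qed.

Section WeakColoring.

Variables (V : finType) (e : rel V).

Definition rank_of (k : V -> nat) (x : V) : nat := #|[set y | k y < k x]|.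

Lemma rank_of_lt k x : rank_of k x < #|V|.
Proof.
apply: proper_card; apply/properP; split; first exact: subset_predT.
by exists x; rewrite ?inE ?ltnn.
Qed.

Lemma ltn_rank_of k x y : (rank_of k x < rank_of k y) = (k x < k y).
Proof.
apply/idP/idP => [|lt_xy].
  rewrite !ltnNge; apply: contra => le_yx; apply: subset_leq_card.
  by apply/subsetP => z; rewrite !inE => /leq_trans; apply.
apply: proper_card; apply/properP; split; last by exists x; rewrite !inE ?ltnn.
by apply/subsetP => z; rewrite !inE => /ltn_trans; apply.
Qed.

Lemma eq_wreach (f g : V -> nat) r u :
  (forall x y, (f x < f y) = (g x < g y)) -> wreach e f r u = wreach e g r u.
Proof.
move=> fg; apply/setP => v; rewrite !inE /wreachable fg.
by have -> : (fun p => f p < f v) = (fun p => g p < g v) by apply: funext => p; rewrite fg.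
Qed.

Lemma wcol_le (k : V -> nat) r b :
  injective k -> (forall u, #|wreach e k r u| <= b) -> wcol e r <= b.
Proof.
move=> k_inj wreach_le.
pose F := [ffun x => Ordinal (rank_of_lt k x)].
have F_inj : injectiveb F.
  apply/injectiveP => x y; rewrite !ffunE => /(congr1 val) /= eq_rk.
  apply: k_inj; apply/eqP.
  by rewrite eqn_leq (leqNgt (k x)) (leqNgt (k y)) -!(ltn_rank_of k) eq_rk ltnn.
apply: leq_trans (geq_bigminn_cond _ _ F_inj) _.
apply/bigmax_leqP => u _; rewrite (@eq_wreach _ k) ?wreach_le // => x y.
by rewrite !ffunE ltn_rank_of.
Qed.

Lemma wreach2P (f : V -> nat) u v : v \in wreach e f 2 u ->
  f u < f v /\ (e u v \/ exists w, [/\ e u w, e w v, v != u & f w < f v]).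
Proof.
rewrite inE => /asboolP [lt_uv [s [path_s last_s uniq_s size_s inner_s]]].
split=> //; case: s path_s last_s uniq_s size_s inner_s => [|w [|v' [|? ?]]] //=.
- by move=> _ eq_uv; rewrite eq_uv ltnn in lt_uv.
- by rewrite andbT => uv <-; left.
move=> /and3P [uw wv _] <- /and3P []; rewrite !inE negb_or => /andP [_ uv'] _ _ _.
by rewrite andbT => lt_wv; right; exists w; rewrite eq_sym.
Qed.

Definition lex_rank (c : V -> nat) (x : V) : nat := c x * #|V| + enum_rank x.

Lemma lex_rank_inj c : injective (lex_rank c).
Proof.
move=> x y /(congr1 (modn^~ #|V|)); rewrite /lex_rank !modnMDl !modn_small //.
by move=> /ord_inj /enum_rank_inj.
Qed.

Lemma lex_rank_ltW c x y : lex_rank c x < lex_rank c y -> c x <= c y.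
Proof.
move=> lt_xy; rewrite leqNgt; apply/negP => lt_c.
suff : lex_rank c y < lex_rank c x by rewrite ltnNge ltnW.
rewrite /lex_rank (leq_trans _ (leq_addr _ _)) // (leq_trans _ (leq_mul lt_c (leqnn _))) //.
by rewrite mulSn addnC ltn_add2r.
Qed.

Lemma wreach2_lex_rank (c : V -> nat) u v : v \in wreach e (lex_rank c) 2 u ->
  c u <= c v /\ (e u v \/ exists w, [/\ e u w, e w v, v != u & c w <= c v]).
Proof.
case/wreach2P => /lex_rank_ltW le_uv [uv|[w [uw wv vu /lex_rank_ltW le_wv]]].
  by split; [|left].
by split; [|right; exists w].
Qed.

End WeakColoring.

Lemma leq_card_bigcup (I T : finType) (D : {pred I}) (A : I -> {set T}) :
  #|\bigcup_(i in D) A i| <= \sum_(i in D) #|A i|.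
Proof.
elim/big_rec2: _ => [|i s U _ le_Us]; first by rewrite cards0.
by rewrite (leq_trans (leq_card_setU _ _).1) ?leq_add2l.
Qed.

Section Graph.

Variables (n m : nat) (cl : 'I_m -> {set literal n}) (a : 'I_n -> bool).

Definition neg_lit (l : literal n) : literal n := (l.1, ~~ l.2).

Definition litV (L : {set literal n}) : {set rawV n m} := [set inr l | l in L].

Definition fpairV (i : 'I_m) : {set rawV n m} := [set inl (inr (i, b)) | b : bool].

Definition clauses_of (l : literal n) : {set 'I_m} := [set i | l \in cl i].

Definition level (x : rawV n m) : nat :=
  match x with
  | inl (inl _) => 0
  | inl (inr _) => 1
  | inr l => if a l.1 == l.2 then 3 else 2
  end.

Definition reach_bound (x : rawV n m) : {set rawV n m} :=
  match x with
  | inl (inl (i, _)) => litV (cl i) :|: (if #|cl i| == 2 then fpairV i else set0)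
                        :|: litV [set neg_lit l | l in [set l in cl i | a l.1 != l.2]]
  | inl (inr (i, _)) => litV (cl i) :|: fpairV i
  | inr l => litV (neg_lit l |: \bigcup_(i in clauses_of l) (cl i :\ l))
  end.

Lemma mem_litV l L : (inr l \in litV L) = (l \in L).
Proof. by rewrite mem_imset //; move=> ? ? []. Qed.

Lemma mem_fpairV i b : inl (inr (i, b)) \in fpairV i.
Proof. exact: imset_f. Qed.

Definition reach2_up (x v : rawV n m) : Prop :=
  rawadj cl x v \/
  exists w, [/\ rawadj cl x w, rawadj cl w v, v != x & level w <= level v].

Lemma mem_reach_bound_clause i k v : presentV cl v ->
  reach2_up (inl (inl (i, k))) v -> v \in reach_bound (inl (inl (i, k))).
Proof.
rewrite /reach2_up; case: v => [[[i' k']|[i' b']]|[j' b']] /= v_pres.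
- by case=> [//|[w []]]; case: w => [[[? ?]|[? ?]]|l''] //= _ _ _; case: ifP.
- case=> [/eqP ->|[w []]]; last by case: w => [[[? ?]|[? ?]]|[? ?]].
  by rewrite v_pres !inE mem_fpairV orbT.
case=> [l'_in|[w []]]; first by rewrite !inE mem_litV l'_in.
case: w => [[[? ?]|[? ?]]|[j'' b'']] //= l''_in /andP [/eqP <- ne_b] _.
have -> : b' = ~~ b'' by case: (b') (b'') ne_b => [] [].
case: (a j'' =P b'') => [->|false_l'']; first by case: (b'').
move=> _; rewrite !inE !mem_litV; apply/orP; right.
by apply/imsetP; exists (j'', b''); rewrite // !inE l''_in; apply/eqP.
Qed.

Lemma mem_reach_bound_fpair i b v : level (inl (inr (i, b))) <= level v ->
  reach2_up (inl (inr (i, b))) v -> v \in reach_bound (inl (inr (i, b))).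
Proof.
rewrite /reach2_up; case: v => [[[i' k']|[i' b']]|[j' b']] //= _.
- case=> [//|[w []]]; case: w => [[[i'' ?]|[? ?]]|[? ?]] //= /eqP <- /eqP <- _ _.
  by rewrite !inE mem_fpairV orbT.
case=> [//|[w []]]; case: w => [[[i'' ?]|[? ?]]|[? ?]] //= /eqP <- l'_in _ _.
by rewrite !inE mem_litV l'_in.
Qed.

Lemma mem_reach_bound_lit l v : level (inr l) <= level v ->
  reach2_up (inr l) v -> v \in reach_bound (inr l).
Proof.
case: l => j b; rewrite /reach2_up; case: v => [[[i' k']|[i' b']]|[j' b']] /=.
- by case: ifP.
- by case: ifP.
move=> _; case=> [/andP [/eqP <- ne_b]|[w []]].
  have -> : b' = ~~ b by case: (b) (b') ne_b => [] [].
  by rewrite mem_litV !inE eqxx.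
case: w => [[[i'' ?]|[? ?]]|[j'' b'']] //=.
  move=> l_in l'_in ne_l' _; rewrite mem_litV !inE; apply/orP; right.
  by apply/bigcupP; exists i''; rewrite !inE ?l'_in ?andbT.
move=> /andP [/eqP <- ne_b] /andP [/eqP <- ne_b'].
suff -> : b' = b by rewrite eqxx.
by case: (b) (b') (b'') ne_b ne_b' => [] [] [].
Qed.

Lemma mem_reach_bound x v : presentV cl v -> level x <= level v ->
  reach2_up x v -> v \in reach_bound x.
Proof.
case: x => [[[i k]|[i b]]|l] v_pres le_xv.
- exact: mem_reach_bound_clause.
- exact: mem_reach_bound_fpair.
- exact: mem_reach_bound_lit.
Qed.

Section Card.

Hypotheses (cl_2c3sat : is_2c3sat cl)
  (a_sat : forall i, exists2 l, l \in cl i & a l.1 = l.2).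

Lemma card_litV L : #|litV L| = #|L|.
Proof. by rewrite card_imset // => ? ? []. Qed.

Lemma card_fpairV i : #|fpairV i| = 2.
Proof. by rewrite card_imset ?card_bool // => ? ? []. Qed.

Lemma card_clause_le3 i : #|cl i| <= 3.
Proof. by case: cl_2c3sat => /(_ i) [] ->. Qed.

Lemma card_false_lits i : #|[set l in cl i | a l.1 != l.2]| < #|cl i|.
Proof.
have [l l_in l_true] := a_sat i; apply: proper_card; apply/properP; split.
  by apply/subsetP => l'; rewrite inE => /andP [].
by exists l; rewrite // inE l_true eqxx andbF.
Qed.

Lemma card_reach_bound_clause i k : #|reach_bound (inl (inl (i, k)))| <= 5.
Proof.
rewrite /=; set F := [set l in cl i | _].
have card_B : #|if #|cl i| == 2 then fpairV i else set0| = (#|cl i| == 2).*2.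
  by case: ifP; rewrite ?card_fpairV ?cards0.
have card_C : #|litV [set neg_lit l | l in F]| < #|cl i|.
  by rewrite card_litV card_imset ?card_false_lits // => [[? ?] [? ?] [-> /negb_inj ->]].
apply: leq_trans (leq_card_setU _ _).1 _.
apply: leq_trans (leq_add (leq_card_setU _ _).1 (leqnn _)) _.
by rewrite card_litV card_B; move: card_C; case: cl_2c3sat => /(_ i) [] ->.
Qed.

Lemma card_reach_bound_fpair i b : presentV cl (inl (inr (i, b))) ->
  #|reach_bound (inl (inr (i, b)))| <= 5.
Proof.
move=> /= /eqP card_cl; apply: leq_trans (leq_card_setU _ _).1 _.
by rewrite card_litV card_fpairV card_cl.
Qed.

Lemma card_reach_bound_lit l : #|reach_bound (inr l)| <= 5.
Proof.
have card_del : forall i, i \in clauses_of l -> #|cl i :\ l| <= 2.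
  by move=> i; rewrite inE => l_in; have := card_clause_le3 i; rewrite (cardsD1 l) l_in.
rewrite /= card_litV (leq_trans (leq_card_setU _ _).1) // cards1 add1n ltnS.
apply: leq_trans (@leq_card_bigcup _ _ _ (fun i => cl i :\ l)) _.
apply: (@leq_trans (\sum_(i in clauses_of l) 2)); first exact: leq_sum.
by case: cl_2c3sat => _ [_ card_cl]; rewrite sum_nat_const card_cl.
Qed.

Lemma card_reach_bound x : presentV cl x -> #|reach_bound x| <= 5.
Proof.
case: x => [[[i k]|[i b]]|l] x_pres.
- exact: card_reach_bound_clause.
- exact: card_reach_bound_fpair.
- exact: card_reach_bound_lit.
Qed.

End Card.

End Graph.

Theorem lemma3p2 (n m : nat) (cl : 'I_m -> {set literal n}) :
  is_2c3sat cl -> satisfiable cl -> wcol (@Gadj n m cl) 2 <= 5.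
Proof.
move=> cl_2c3sat [a a_sat].
apply: (@wcol_le _ _ (lex_rank (level a \o val))) => [|u]; first exact: lex_rank_inj.
apply: leq_trans (card_reach_bound cl_2c3sat a_sat (valP u)).
rewrite -(card_imset _ val_inj); apply: subset_leq_card.
apply/subsetP => _ /imsetP [v /wreach2_lex_rank [le_uv reach_uv] ->].
apply: mem_reach_bound (valP v) le_uv _.
case: reach_uv => [uv|[w [uw wv vu le_wv]]]; [left | right; exists (val w)] => //.
Qed.
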